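(* Let $X$ be compact and $\alpha$ a standard cocycle representing $a$. Then $\|\widehat g\|_\alpha=\sup_{x\in X}|\rho_{x,\alpha}(\widehat g)|$ is finite for every $\widehat g\in\widehat G_a$, and $\|\cdot\|_\alpha$ is a seminorm on $\widehat G_a$: $\|\widehat g^{-1}\|_\alpha=\|\widehat g\|_\alpha$ and $\|\widehat g\widehat h\|_\alpha\le\|\widehat g\|_\alpha+\|\widehat h\|_\alpha$ for all $\widehat g,\widehat h\in\widehat G_a$.
   Context: $A$ is $\mathbb{Z}$ or the discrete group $\mathbb{R}$. $X$ is a path-connected space, $a\in\mathrm{H}^1(X;A)$, $\pi\colon\widehat X_a\to X$ a principal $A$-bundle with holonomy $a$, $T_r$ the action of $r\in A$. $\widehat G_a$ is the group of homeomorphisms $\widehat g$ of $\widehat X_a$ with $\pi\circ\widehat g=g\circ\pi$ for a homeomorphism $g$ of $X$. A real singular $1$-cocycle $\alpha$ representing $a$ is standard if there is a continuous $\theta\colon\widehat X_a\to\mathbb{R}$ with $d\theta=\pi^*\alpha$ and $\theta(T_r\widehat y)=\theta(\widehat y)+r$ for all $\widehat y,r$. Then $\rho_{x,\alpha}(\widehat g)=\theta(\widehat g(\widehat x))-\theta(\widehat x)$ for any $\widehat x\in\pi^{-1}(x)$. *)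

From HB Require Import structures.
From mathcomp Require Import all_boot all_order all_algebra.
From mathcomp Require Import all_classical all_reals all_analysis.
Set Implicit Arguments. Unset Strict Implicit. Unset Printing Implicit Defensive.
Import Order.TTheory GRing.Theory Num.Theory.
Import numFieldNormedType.Exports.
Local Open Scope classical_set_scope.
Local Open Scope ring_scope.

Section Defs.
Variable R : realType.

(* A is Z or the (discrete) group R, given as an abelian group with an
   additive injective embedding iota into R whose image is Z or all of R. *)
Definition A_is_Z_or_R (A : zmodType) (iota : A -> R) : Prop :=
  (forall r s, iota (r + s) = iota r + iota s) /\ injective iota /\
  (range iota = range (fun z : int => z%:~R) \/ range iota = setT).

(* singular 1-simplices are modelled as maps R -> X continuous on [0,1] *)
Definition path_connected (X : topologicalType) : Prop :=
  (exists x : X, True) /\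
  forall x y : X, exists g : R -> X,
    {within `[0, 1], continuous g} /\ g 0 = x /\ g 1 = y.

Definition homeo (X : topologicalType) (f : X -> X) : Prop :=
  continuous f /\ exists f' : X -> X, cancel f f' /\ cancel f' f /\ continuous f'.

(* principal A-bundle (A discrete): free action of A on Xh by homeomorphisms
   preserving fibres of pi, locally trivial: pi^-1(U) = U x A via (u,r) |-> T r (s u) *)
Definition principal_bundle (A : zmodType) (X Xh : topologicalType)
  (pi : Xh -> X) (T : A -> Xh -> Xh) : Prop :=
  continuous pi /\
  (forall y, T 0 y = y) /\ (forall r s y, T (r + s) y = T r (T s y)) /\
  (forall r, continuous (T r)) /\ (forall r y, pi (T r y) = pi y) /\
  forall x : X, exists (U : set X) (s : X -> Xh),
    open U /\ U x /\ {within U, continuous s} /\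
    (forall u, U u -> pi (s u) = u) /\
    (forall r, open (T r @` (s @` U))) /\
    (forall y, U (pi y) -> exists! p : X * A, U p.1 /\ y = T p.2 (s p.1)).

Definition Delta2 : set (R * R) := [set p | 0 <= p.1 /\ 0 <= p.2 /\ p.1 + p.2 <= 1].
Definition face0 (t : R) : R * R := (1 - t, t).
Definition face1 (t : R) : R * R := (0, t).
Definition face2 (t : R) : R * R := (t, 0).

(* real singular 1-cochain = function on singular 1-simplices *)
Definition singular_1cocycle (X : topologicalType) (alpha : (R -> X) -> R) : Prop :=
  forall tau : R * R -> X, {within Delta2, continuous tau} ->
    alpha (tau \o face0) - alpha (tau \o face1) + alpha (tau \o face2) = 0.

(* theta witnesses that alpha is standard: d theta = pi^* alpha, theta(T_r y) = theta y + r *)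
Definition standard_witness (A : zmodType) (iota : A -> R) (X Xh : topologicalType)
  (pi : Xh -> X) (T : A -> Xh -> Xh) (alpha : (R -> X) -> R) (theta : Xh -> R) : Prop :=
  continuous theta /\
  (forall r y, theta (T r y) = theta y + iota r) /\
  (forall sigma : R -> Xh, {within `[0, 1], continuous sigma} ->
     theta (sigma 1) - theta (sigma 0) = alpha (pi \o sigma)).

Definition in_Ghat (A : zmodType) (X Xh : topologicalType)
  (pi : Xh -> X) (T : A -> Xh -> Xh) (gh : Xh -> Xh) : Prop :=
  homeo gh /\ (exists g : X -> X, homeo g /\ pi \o gh = g \o pi) /\
  (forall r, gh \o T r = T r \o gh).

(* rho_{x,alpha}(gh) = theta(gh xh) - theta xh for xh := lift x in pi^-1(x);
   the choice of the lifts is an arbitrary function lift with pi \o lift = id *)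
Definition rho (X Xh : topologicalType) (lift : X -> Xh) (theta : Xh -> R)
  (x : X) (gh : Xh -> Xh) : R := theta (gh (lift x)) - theta (lift x).

Definition rho_abs_set (X Xh : topologicalType) (lift : X -> Xh) (theta : Xh -> R)
  (gh : Xh -> Xh) : set R := [set `|rho lift theta x gh| | x in [set: X]].

Definition seminorm_alpha (X Xh : topologicalType) (lift : X -> Xh) (theta : Xh -> R)
  (gh : Xh -> Xh) : R := sup (rho_abs_set lift theta gh).

End Defs.

From HB Require Import structures.
From mathcomp Require Import all_boot all_order all_algebra.
From mathcomp Require Import all_classical all_reals all_analysis.
Import Order.TTheory GRing.Theory Num.Theory.
Import numFieldNormedType.Exports.
Local Open Scope classical_set_scope.
Local Open Scope ring_scope.

(** Since theta is A-equivariant and gh commutes with the A-action, the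
    displacement y |-> theta (gh y) - theta y of gh is constant on the fibres
    of pi. Hence rho_x(gh) does not depend on the lift of x, and reading it
    through local sections shows that it is continuous in x, so bounded on the
    compact X. Displacements satisfy the cocycle rule
    disp (gh \o hh) = disp gh \o hh + disp hh, which gives the triangle
    inequality, and disp gh^-1 = - disp gh \o gh^-1, which gives the symmetry. *)

Lemma compact_has_ubound_normr {R : realType} {X : topologicalType} {f : X -> R} :
  compact [set: X] -> continuous f -> has_ubound ([set `|f x| | x in [set: X]] : set R).
Proof.
move=> cX cf.
have [M [_ HM]] := compact_bounded (continuous_compact (continuous_subspaceT cf) cX).
exists (M + 1) => _ [x _ <-].
by apply: (HM (M + 1)); [rewrite ltrDl | exists x].
Qed.

Lemma comp_commute_can {Y : Type} {f f' g : Y -> Y} :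
  cancel f f' -> cancel f' f -> f \o g = g \o f -> f' \o g = g \o f'.
Proof.
move=> ff' f'f fg; apply: funext => y /=.
have /= e := congr1 (fun h => h (f' y)) fg.
by rewrite f'f in e; rewrite -e ff'.
Qed.

Section Displacement.
Context {R : realType} {Y : topologicalType} (theta : Y -> R).

Definition displacement (f : Y -> Y) (y : Y) : R := theta (f y) - theta y.

Lemma displacement_comp f g y :
  displacement (f \o g) y = displacement f (g y) + displacement g y.
Proof. by rewrite /displacement /= addrA subrK. Qed.

Lemma displacement_can f f' y :
  cancel f' f -> displacement f' y = - displacement f (f' y).
Proof. by move=> f'f; rewrite /displacement f'f opprB. Qed.

Lemma continuous_displacement f :
  continuous theta -> continuous f -> continuous (displacement f).
Proof.
move=> ctheta cf y; apply: cvgB; last exact: ctheta.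
exact: continuous_comp (cf y) (ctheta _).
Qed.

End Displacement.

Section Bundle.
Context {R : realType} {A : zmodType} {iota : A -> R}
  {X Xh : topologicalType} { pi : Xh -> X } {T : A -> Xh -> Xh}
  {theta : Xh -> R} {lift : X -> Xh}.
Hypothesis bundle : principal_bundle pi T.
Hypothesis thetaT : forall r y, theta (T r y) = theta y + iota r.
Hypothesis pi_lift : forall x, pi (lift x) = x.

Definition commutes_with_action (gh : Xh -> Xh) := forall r, gh \o T r = T r \o gh.

Lemma fibre_action y z : pi y = pi z -> exists r, y = T r z.
Proof.
move=> pi_yz; have [_ [_ [TD [_ [piT loc]]]]] := bundle.
have [U [s [_ [Uy [_ [pis [_ trivial]]]]]]] := loc (pi y).
have [[p r] [[/= Up ey] _]] := trivial y Uy.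
have Uz : U (pi z) by rewrite -pi_yz.
have [[q t] [[/= Uq ez] _]] := trivial z Uz.
have qp : q = p by rewrite -(pis _ Uq) -(pis _ Up) -(piT t) -ez -pi_yz ey piT.
by exists (r - t); rewrite ey ez qp -TD subrK.
Qed.

Lemma displacementT gh r y : commutes_with_action gh ->
  displacement theta gh (T r y) = displacement theta gh y.
Proof.
move=> ghT; rewrite /displacement.
rewrite -[gh (T r y)]/((gh \o T r) y) ghT /= !thetaT.
by rewrite opprD addrACA subrr addr0.
Qed.

Lemma rho_pi gh y : commutes_with_action gh ->
  rho lift theta (pi y) gh = displacement theta gh y.
Proof.
move=> ghT; have [_ [_ [_ [_ [piT _]]]]] := bundle.
have [r ->] := fibre_action y (lift (pi y)) (esym (pi_lift _)).
by rewrite displacementT // piT pi_lift.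
Qed.

Lemma continuous_rho gh : continuous theta -> continuous gh ->
  commutes_with_action gh -> continuous (fun x => rho lift theta x gh).
Proof.
move=> ctheta cgh ghT x; have [_ [_ [_ [_ [_ loc]]]]] := bundle.
have [U [s [oU [Ux [cs [pis _]]]]]] := loc x.
move: cs; rewrite continuous_open_subspace // => cs.
have rho_s : {near x, displacement theta gh \o s =1 (fun u => rho lift theta u gh)}.
  near=> u => /=; rewrite -rho_pi // pis //.
  by near: u; apply: open_nbhs_nbhs.
rewrite /continuous_at -(nbhs_singleton rho_s).
apply: cvg_trans (near_eq_cvg rho_s) _.
exact: continuous_comp (cs _ (mem_set Ux)) (continuous_displacement _ _ ctheta cgh _).
Unshelve. all: by end_near.
Qed.

Lemma rho_comp gh hh x : commutes_with_action gh ->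
  rho lift theta x (gh \o hh) = rho lift theta (pi (hh (lift x))) gh + rho lift theta x hh.
Proof. by move=> ghT; rewrite rho_pi //; apply: displacement_comp. Qed.

Lemma rho_can gh gh' x : commutes_with_action gh -> cancel gh gh' -> cancel gh' gh ->
  rho lift theta x gh' = - rho lift theta (pi (gh' (lift x))) gh.
Proof.
by move=> ghT ghK gh'K; rewrite rho_pi //; apply: displacement_can.
Qed.

Lemma rho_abs_set_can gh gh' : commutes_with_action gh -> cancel gh gh' -> cancel gh' gh ->
  rho_abs_set lift theta gh' = rho_abs_set lift theta gh.
Proof.
move=> ghT ghK gh'K; have gh'T : commutes_with_action gh'.
  by move=> r; apply: comp_commute_can ghK gh'K (ghT r).
apply/seteqP; split=> _ [x _ <-].
- by exists (pi (gh' (lift x))) => //; rewrite (rho_can _ _ _ ghT ghK gh'K) normrN.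
- by exists (pi (gh (lift x))) => //; rewrite (rho_can _ _ _ gh'T gh'K ghK) normrN.
Qed.

Lemma seminorm_alpha_comp gh hh (x0 : X) : commutes_with_action gh ->
  has_ubound (rho_abs_set lift theta gh) -> has_ubound (rho_abs_set lift theta hh) ->
  seminorm_alpha lift theta (gh \o hh)
    <= seminorm_alpha lift theta gh + seminorm_alpha lift theta hh.
Proof.
move=> ghT bgh bhh; apply: ge_sup; first by exists `|rho lift theta x0 (gh \o hh)|, x0.
move=> _ [x _ <-]; rewrite rho_comp //.
apply: le_trans (ler_normD _ _) _.
by apply: lerD; apply: ub_le_sup => //; [exists (pi (hh (lift x))) | exists x].
Qed.

End Bundle.

(* Only the continuity and A-equivariance of theta enter the proof: the shape
   of A, the cocycle condition and the relation between theta and alpha do not,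
   and path-connectedness is used only to know that X is nonempty. *)
Theorem lemma4p1 (R : realType) (A : zmodType) (iota : A -> R)
  (X Xh : topologicalType) (pi : Xh -> X) (T : A -> Xh -> Xh)
  (alpha : (R -> X) -> R) (theta : Xh -> R) (lift : X -> Xh) :
  A_is_Z_or_R iota ->
  path_connected R X ->
  compact [set: X] ->
  principal_bundle pi T ->
  singular_1cocycle alpha ->
  standard_witness iota pi T alpha theta ->
  (forall x, pi (lift x) = x) ->
  (forall gh, in_Ghat pi T gh -> has_ubound (rho_abs_set lift theta gh)) /\
  (forall gh gh', in_Ghat pi T gh -> cancel gh gh' -> cancel gh' gh ->
     seminorm_alpha lift theta gh' = seminorm_alpha lift theta gh) /\
  (forall gh hh, in_Ghat pi T gh -> in_Ghat pi T hh ->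
     seminorm_alpha lift theta (gh \o hh)
       <= seminorm_alpha lift theta gh + seminorm_alpha lift theta hh).
Proof.
move=> _ [[x0 _] _] cX bundle _ [ctheta [thetaT _]] pi_lift.
have bounded gh : in_Ghat pi T gh -> has_ubound (rho_abs_set lift theta gh).
  case=> [[cgh _] [_ ghT]].
  exact: (compact_has_ubound_normr cX (continuous_rho bundle thetaT pi_lift _ ctheta cgh ghT)).
split=> //; split.
- move=> gh gh' [_ [_ ghT]] ghK gh'K.
  by rewrite /seminorm_alpha (rho_abs_set_can bundle thetaT pi_lift _ _ ghT ghK gh'K).
- move=> gh hh Ggh Ghh; have [_ [_ ghT]] := Ggh.
  exact: seminorm_alpha_comp bundle thetaT pi_lift _ _ x0 ghT (bounded _ Ggh) (bounded _ Ghh).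
Qed.
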